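(* Let $\mathcal{B}=\langle V,F,E\rangle$ be a finite bipartite graph and $W\subseteq V$ such that the subgraph $\mathcal{B}'$ of $\mathcal{B}$ induced by $(V\setminus W)\cup F$ is self-contained. Then for every perfect matching $M$ of $\mathcal{B}'$, the output of Algorithm 2 (causal ordering via the perfect matching $M$) applied to $(W,\mathcal{B})$ coincides with the output of Algorithm 1 applied to $(W,\mathcal{B})$.
   Context: A bipartite graph $\mathcal{B}=\langle V,F,E\rangle$ has disjoint vertex sets $V$, $F$ and undirected edges $(v-f)$ with $v\in V$, $f\in F$; $\mathrm{adj}_{\mathcal{B}}(X)$ denotes the set of vertices adjacent to some vertex of $X$. A set $F'\subseteq F$ is self-contained if $|F'|=|\mathrm{adj}_{\mathcal{B}}(F')|$ and $|F''|\le|\mathrm{adj}_{\mathcal{B}}(F'')|$ for all $F''\subseteq F'$; $\mathcal{B}$ is self-contained if $|F|=|V|$ and $F$ is self-contained; a non-empty self-contained set is minimal self-contained if no non-empty strict subset is self-contained. A matching is a set of edges with no common endpoints; it is perfect if every vertex is matched. For a matching $M$ and a set of vertices $X$, $M(X)$ is the set of vertices matched by $M$ to some vertex of $X$. A directed cluster graph is a pair $\langle\mathcal{V},\mathcal{E}\rangle$ with $\mathcal{V}$ a partition of a vertex set and $\mathcal{E}$ a set of edges $x\to C$ from vertices to clusters. Algorithm 1. Initialize $\mathcal{E}=\emptyset$, $\mathcal{V}=\{\{w\}:w\in W\}$, $\mathcal{B}'=\langle V',F',E'\rangle$ the subgraph induced by $(V\setminus W)\cup F$. While $\mathcal{B}'$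 is not the null graph: choose a minimal self-contained set $S_F\subseteq F'$ of $\mathcal{B}'$; let $C=S_F\cup\mathrm{adj}_{\mathcal{B}'}(S_F)$; add $C$ to $\mathcal{V}$; for every $v\in\mathrm{adj}_{\mathcal{B}}(S_F)\setminus\mathrm{adj}_{\mathcal{B}'}(S_F)$ add $v\to C$ to $\mathcal{E}$; replace $\mathcal{B}'$ by its subgraph induced by $(V'\cup F')\setminus C$. Output $\langle\mathcal{V},\mathcal{E}\rangle$. (Its output is independent of the choices made.) Algorithm 2 (with perfect matching $M$ of $\mathcal{B}'$). (i) Orient edges: form the directed graph $\mathcal{G}(\mathcal{B},M)$ on $V\cup F$ containing, for each $(v-f)\in E$, the edge $f\to v$ if $(v-f)\in M$ and the edge $v\to f$ otherwise. (ii) Construct clusters: let $\mathcal{V}'$ be the partition of $V\cup F$ into strongly connected components of $\mathcal{G}(\mathcal{B},M)$, and $\mathcal{E}'=\{x\to \mathrm{cl}(w): (x\to w)\text{ in }\mathcal{G}(\mathcal{B},M),\ x\notin\mathrm{cl}(w)\}$, where $\mathrm{cl}(w)$ is the component containing $w$. (iii) Merge clusters: $\mathcal{V}=\{S\cup M(S):S\in\mathcal{V}'\}$ and $\mathcal{E}=\{x\to S\cup M(S): (x\to S)\in\mathcal{E}',\ x\notin M(S)\}$. Output $\langle\mathcal{V},\mathcal{E}\rangle$. *)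

From mathcomp Require Import all_boot.
Set Implicit Arguments. Unset Strict Implicit. Unset Printing Implicit Defensive.

(* A bipartite graph <V,F,E> on a finite carrier T.  An edge (v - f) is
   stored as the pair (v, f) with v in V and f in F. *)
Record bigraph (T : finType) := Bigraph {
  bV : {set T};
  bF : {set T};
  bE : {set T * T} }.

Definition wf_bigraph (T : finType) (B : bigraph T) : Prop :=
  [disjoint bV B & bF B] /\
  (forall e, e \in bE B -> e.1 \in bV B /\ e.2 \in bF B).

Definition induced (T : finType) (B : bigraph T) (U : {set T}) : bigraph T :=
  Bigraph (bV B :&: U) (bF B :&: U) [set e in bE B | (e.1 \in U) && (e.2 \in U)].

Definition bedge (T : finType) (B : bigraph T) (x y : T) : bool :=
  ((x, y) \in bE B) || ((y, x) \in bE B).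

Definition adj (T : finType) (B : bigraph T) (X : {set T}) : {set T} :=
  [set y | [exists x in X, bedge B x y]].

Definition sc_set (T : finType) (B : bigraph T) (S : {set T}) : Prop :=
  S \subset bF B /\ #|S| = #|adj B S| /\
  (forall S2 : {set T}, S2 \subset S -> #|S2| <= #|adj B S2|).

Definition self_contained (T : finType) (B : bigraph T) : Prop :=
  #|bF B| = #|bV B| /\ sc_set B (bF B).

Definition minimal_sc (T : finType) (B : bigraph T) (S : {set T}) : Prop :=
  S != set0 /\ sc_set B S /\
  (forall S2 : {set T}, S2 \proper S -> S2 != set0 -> ~ sc_set B S2).

Definition null_graph (T : finType) (B : bigraph T) : Prop :=
  bV B = set0 /\ bF B = set0.

Definition is_matching (T : finType) (B : bigraph T) (M : {set T * T}) : Prop :=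
  M \subset bE B /\
  (forall e1 e2, e1 \in M -> e2 \in M -> (e1.1 = e2.1 \/ e1.2 = e2.2) -> e1 = e2).

Definition perfect_matching (T : finType) (B : bigraph T) (M : {set T * T}) : Prop :=
  is_matching B M /\
  (forall x, x \in bV B :|: bF B -> exists2 e, e \in M & (e.1 = x \/ e.2 = x)).

Definition matched (T : finType) (M : {set T * T}) (X : {set T}) : {set T} :=
  [set y | [exists x in X, ((x, y) \in M) || ((y, x) \in M)]].

(* directed cluster graph: (clusters, edges x -> C) *)
Definition cgraph (T : finType) := ({set {set T}} * {set T * {set T}})%type.

(* alg1_from B U G G' : starting with current B' = induced B U and
   accumulated cluster graph G, some run of the loop outputs G'. *)
Inductive alg1_from (T : finType) (B : bigraph T) :
    {set T} -> cgraph T -> cgraph T -> Prop :=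
| alg1_stop U G : null_graph (induced B U) -> alg1_from B U G G
| alg1_step U G S G' :
    minimal_sc (induced B U) S ->
    alg1_from B (U :\: (S :|: adj (induced B U) S))
      ((S :|: adj (induced B U) S) |: G.1,
       G.2 :|: [set (v, S :|: adj (induced B U) S)
                 | v in adj B S :\: adj (induced B U) S]) G' ->
    alg1_from B U G G'.

Definition alg1_output (T : finType) (B : bigraph T) (W : {set T}) (G : cgraph T) : Prop :=
  alg1_from B ((bV B :\: W) :|: bF B) ([set [set w] | w in W], set0) G.

(* oriented graph G(B,M): f -> v if (v-f) in M, v -> f otherwise *)
Definition dedge (T : finType) (B : bigraph T) (M : {set T * T}) : rel T :=
  fun x y => (((y, x) \in bE B) && ((y, x) \in M)) ||
             (((x, y) \in bE B) && ((x, y) \notin M)).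

Definition scc (T : finType) (B : bigraph T) (M : {set T * T}) (w : T) : {set T} :=
  [set y in bV B :|: bF B | connect (dedge B M) w y && connect (dedge B M) y w].

Definition alg2_clusters (T : finType) (B : bigraph T) (M : {set T * T}) : cgraph T :=
  ([set scc B M x | x in bV B :|: bF B],
   [set (x, scc B M w) | x in bV B :|: bF B, w in bV B :|: bF B
      & dedge B M x w && (x \notin scc B M w)]).

Definition alg2_output (T : finType) (B : bigraph T) (M : {set T * T}) : cgraph T :=
  let G' := alg2_clusters B M in
  ([set S :|: matched M S | S in G'.1],
   [set (p.1, p.2 :|: matched M p.2) | p in G'.2 & p.1 \notin matched M p.2]).

From mathcomp Require Import all_boot.
From Stdlib Require Import Classical.
Set Implicit Arguments. Unset Strict Implicit. Unset Printing Implicit Defensive.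

(* Let m be the partner function of M on U0 = (V \ W) ∪ F.  Along every run of
   Algorithm 1 the vertex set U of the current graph B' stays inside U0 and is
   closed under m and under successors in G(B,M).  A minimal self-contained set
   S of B' has adj_B'(S) = m(S), and minimality forces every vertex of
   C = S ∪ m(S) to reach every other one in G(B,M) when |S| > 1.  Hence C is
   exactly one merged cluster of Algorithm 2, and the edges x -> C added by
   Algorithm 1 are exactly the edges of Algorithm 2 into C.  So after each step
   Algorithm 1 has output precisely the part of Algorithm 2's output whose
   clusters are not contained in U: the singletons of W at the start, and
   everything once U is empty.  Runs exist because F ∩ U is self-contained for
   every nonempty such U, and U shrinks at each step. *)

Lemma connect_closed (T : finType) (e : rel T) (A : {set T}) x y :
  (forall a b, a \in A -> e a b -> b \in A) -> x \in A -> connect e x y -> y \in A.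
Proof.
move=> clA + /connectP [p + ->]; elim: p x => //= z p IH x xA /andP [exz pz].
exact: IH (clA _ _ xA exz) pz.
Qed.

Lemma connect_to_source (T : finType) (e : rel T) x y :
  (forall z, ~~ e z y) -> connect e x y -> x = y.
Proof.
move=> noin /connectP [p]; case/lastP: p => [|p z] /=; first by move=> _ ->.
rewrite rcons_path last_rcons => /andP [_ + ez]; rewrite -ez.
by rewrite (negbTE (noin _)).
Qed.

Section Bigraph.
Variables (T : finType) (B : bigraph T).

Lemma adj_induced (U X : {set T}) :
  X \subset U -> adj (induced B U) X = adj B X :&: U.
Proof.
move=> XU; apply/setP => y; rewrite !inE; apply/existsP/andP.
  case=> x /andP [xX]; rewrite /bedge !inE /= => /orP [] /and3P [e xU yU].
    by split=> //; apply/existsP; exists x; rewrite xX /bedge e.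
  by split=> //; apply/existsP; exists x; rewrite xX /bedge e orbT.
case=> /existsP [x /andP [xX exy]] yU; exists x.
by rewrite xX /bedge !inE /= yU (subsetP XU x xX) !andbT.
Qed.

Lemma adjS (X Y : {set T}) : X \subset Y -> adj B X \subset adj B Y.
Proof.
move=> XY; apply/subsetP => y; rewrite !inE => /existsP [x /andP [xX e]].
by apply/existsP; exists x; rewrite (subsetP XY x xX).
Qed.

Lemma minimal_sc_exists (S : {set T}) :
  S != set0 -> sc_set B S -> exists S', minimal_sc B S'.
Proof.
have [n] := ubnP #|S|; elim: n S => // n IH S /ltnSE leSn S0 scS.
case: (classic (exists S2 : {set T}, [/\ S2 \proper S, S2 != set0 & sc_set B S2])).
  case=> S2 [ltS2 S20 scS2]; apply: (IH S2) => //.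
  exact: leq_trans (proper_card ltS2) leSn.
move=> noS2; exists S; split; [done | split=> // S2 ltS2 S20 scS2].
by apply: noS2; exists S2.
Qed.

Hypothesis wfB : wf_bigraph B.

Lemma bV_bF_disjoint x : x \in bV B -> x \in bF B -> False.
Proof. by case: wfB => dis _ xV; rewrite (disjointFr dis xV). Qed.

Lemma bE_VF e : e \in bE B -> e.1 \in bV B /\ e.2 \in bF B.
Proof. by case: wfB => _; apply. Qed.

Lemma adj_bFP (X : {set T}) y : X \subset bF B ->
  reflect (exists2 x, x \in X & (y, x) \in bE B) (y \in adj B X).
Proof.
move=> XF; rewrite inE; apply: (iffP existsP) => [[x /andP [xX]]|[x xX e]].
  case/orP=> e; last by exists x.
  by case: (bV_bF_disjoint (bE_VF e).1 (subsetP XF x xX)).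
by exists x; rewrite xX /bedge e orbT.
Qed.

Lemma adj_induced_bFP (U X : {set T}) y : X \subset bF B :&: U ->
  reflect (y \in U /\ exists2 x, x \in X & (y, x) \in bE B) (y \in adj (induced B U) X).
Proof.
rewrite subsetI => /andP [XF XU]; rewrite adj_induced // inE andbC.
by apply: (iffP andP) => -[yU /(adj_bFP _ XF)].
Qed.

Section Partner.
Variables (D : {set T}) (M : {set T * T}).
Hypotheses (DVF : D \subset bV B :|: bF B) (pmM : perfect_matching (induced B D) M).

Definition mate x y := ((x, y) \in M) || ((y, x) \in M).

Lemma mate_sym x y : mate x y = mate y x.
Proof. by rewrite /mate orbC. Qed.

Definition partner x := if [pick y | mate x y] is Some y then y else x.

Lemma matching_edge e : e \in M -> [/\ e \in bE B, e.1 \in D & e.2 \in D].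
Proof.
case: pmM => [[sub _] _] /(subsetP sub).
by rewrite inE => /andP [-> /andP [-> ->]].
Qed.

Lemma mate_in x y : mate x y -> x \in D.
Proof. by case/orP => /matching_edge []. Qed.

Lemma mate_uniq x y y' : mate x y -> mate x y' -> y = y'.
Proof.
case: pmM => [[_ mat] _].
have no_path2 a b c : (a, b) \in M -> (c, a) \in M -> False.
  move=> /matching_edge [/bE_VF [aV _] _ _] /matching_edge [/bE_VF [_ aF] _ _].
  exact: bV_bF_disjoint aV aF.
case/orP=> h1 /orP [] h2.
- by case: (mat _ _ h1 h2 (or_introl erefl)).
- by case: (no_path2 _ _ _ h1 h2).
- by case: (no_path2 _ _ _ h2 h1).
- by case: (mat _ _ h1 h2 (or_intror erefl)).
Qed.

Lemma mate_partner x : x \in D -> mate x (partner x).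
Proof.
move=> xD; rewrite /partner; case: pickP => [y //|nomate]; exfalso.
case: pmM => _ /(_ x) []; first by rewrite -setIUl inE xD (subsetP DVF).
move=> [a b] eM /= [ax|bx]; subst x; first by have := nomate b; rewrite /mate eM.
by have := nomate a; rewrite /mate eM orbT.
Qed.

Lemma partner_mate x y : mate x y -> partner x = y.
Proof. by move=> xy; apply: mate_uniq (mate_partner (mate_in xy)) xy. Qed.

Lemma partner_in x : x \in D -> partner x \in D.
Proof. by move=> /mate_partner; rewrite mate_sym => /mate_in. Qed.

Lemma partnerK : {in D, cancel partner partner}.
Proof. by move=> x /mate_partner; rewrite mate_sym => /partner_mate. Qed.

Lemma mem_partner_bF x : x \in D -> x \in bF B -> (partner x, x) \in M.
Proof.
move=> xD xF; case/orP: (mate_partner xD) => // /matching_edge [/bE_VF [xV _] _ _].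
by case: (bV_bF_disjoint xV xF).
Qed.

Lemma mem_partner_bV x : x \in D -> x \in bV B -> (x, partner x) \in M.
Proof.
move=> xD xV; case/orP: (mate_partner xD) => // /matching_edge [/bE_VF [_ xF] _ _].
by case: (bV_bF_disjoint xV xF).
Qed.

Lemma matchedE (X : {set T}) : matched M X = partner @: (X :&: D).
Proof.
apply/setP => y; rewrite inE; apply/existsP/imsetP => [[x /andP [xX xy]]|[x]].
  by exists x; [rewrite inE xX (mate_in xy) | rewrite (partner_mate xy)].
by rewrite inE => /andP [xX xD] ->; exists x; rewrite xX; apply: mate_partner.
Qed.

End Partner.
End Bigraph.

Section CausalOrdering.
Variables (T : finType) (B : bigraph T) (W : {set T}) (M : {set T * T}).
Hypotheses (wfB : wf_bigraph B) (WV : W \subset bV B).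
Let VF := bV B :|: bF B.
Let U0 := (bV B :\: W) :|: bF B.
Hypothesis pmM : perfect_matching (induced B U0) M.

Local Notation m := (partner M).
Local Notation dE := (dedge B M).

Lemma U0_VF : U0 \subset VF.
Proof. by apply: setSU; apply: subsetDl. Qed.

Lemma bF_U0 x : x \in bF B -> x \in U0.
Proof. by move=> xF; rewrite inE xF orbT. Qed.

Lemma W_notin_U0 x : x \in W -> x \notin U0.
Proof.
move=> xW; have xV := subsetP WV x xW.
by rewrite !inE xW /=; apply/negP => /(bV_bF_disjoint wfB xV).
Qed.

Lemma VF_notin_U0 x : x \in VF -> x \notin U0 -> x \in W.
Proof. by rewrite !inE; case: (x \in W); case: (x \in bV B); case: (x \in bF B). Qed.

Let partner_U0 := partner_in U0_VF pmM.
Let partnerK_U0 := partnerK wfB U0_VF pmM.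
Let partner_of_mate := partner_mate wfB U0_VF pmM.

Lemma partner_bV_bF x : x \in U0 -> x \in bV B -> m x \in bF B.
Proof.
move=> xU0 xV; have [e _ _] := matching_edge pmM (mem_partner_bV wfB U0_VF pmM xU0 xV).
by case: (bE_VF wfB e).
Qed.

Lemma partner_bF_bV f : f \in bF B -> m f \in bV B.
Proof.
move=> fF; have [e _ _] := matching_edge pmM (mem_partner_bF wfB U0_VF pmM (bF_U0 fF) fF).
by case: (bE_VF wfB e).
Qed.

Lemma dedge_cases x y : dE x y ->
  (y \in U0 /\ x = m y) \/ ((x, y) \in bE B /\ (x, y) \notin M).
Proof.
case/orP => /andP [e yxM]; last by right.
have [_ yU0 _] := matching_edge pmM yxM.
by left; split=> //; apply/esym/partner_of_mate; rewrite /mate yxM.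
Qed.

Lemma dedge_U0 x y : dE x y -> y \in U0.
Proof. by case/dedge_cases => [[]|[/(bE_VF wfB) [_ /bF_U0]]]. Qed.

Lemma dedge_partner f : f \in bF B -> dE f (m f).
Proof.
move=> fF; have fmM := mem_partner_bF wfB U0_VF pmM (bF_U0 fF) fF.
by have [e _ _] := matching_edge pmM fmM; rewrite /dedge e fmM.
Qed.

Definition cluster x := scc B M x :|: matched M (scc B M x).

Lemma in_scc_self x : x \in VF -> x \in scc B M x.
Proof. by move=> xVF; rewrite inE xVF !connect0. Qed.

Lemma cluster_self x : x \in VF -> x \in cluster x.
Proof. by move=> /in_scc_self xx; rewrite inE xx. Qed.

Lemma cluster_partner x : x \in U0 -> m x \in cluster x.
Proof.
move=> xU0; have xx := in_scc_self (subsetP U0_VF x xU0).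
by rewrite inE (matchedE wfB U0_VF pmM) imset_f ?orbT // inE xx.
Qed.

Lemma alg2_clustersP K :
  reflect (exists2 x, x \in VF & K = cluster x) (K \in (alg2_output B M).1).
Proof.
apply: (iffP imsetP) => [[_ /imsetP [x xVF ->] ->]|[x xVF ->]]; first by exists x.
by exists (scc B M x); rewrite ?imset_f.
Qed.

Lemma alg2_edgesP x K : (x, K) \in (alg2_output B M).2 <->
  exists w, [/\ w \in VF, x \in VF, dE x w, x \notin cluster w & K = cluster w].
Proof.
split.
  case/imsetP=> [[a S]]; rewrite inE /= => /andP [/imset2P [a' w a'VF]].
  rewrite inE => /andP [wVF /andP [xw xS]] [-> ->] xM [-> ->].
  by exists w; split=> //; rewrite inE negb_or xS.
case=> w [wVF xVF xw]; rewrite inE negb_or => /andP [xS xM] ->.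
apply/imsetP; exists (x, scc B M w) => //.
by rewrite inE /= xM andbT; apply/imset2P; exists x w; rewrite // inE wVF xw.
Qed.

Definition residual (U : {set T}) :=
  [/\ U \subset U0, forall x y, x \in U -> dE x y -> y \in U
    & {in U0, forall x, (m x \in U) = (x \in U)}].

Definition alg2_outside (U : {set T}) : cgraph T :=
  ([set K in (alg2_output B M).1 | ~~ (K \subset U)],
   [set p in (alg2_output B M).2 | ~~ (p.2 \subset U)]).

Section Step.
Variable U : {set T}.
Hypothesis resU : residual U.
Local Notation BU := (induced B U).

Lemma residual_U0 x : x \in U -> x \in U0.
Proof. by case: resU => UU0 _ _; apply: (subsetP UU0). Qed.

Lemma residual_dedge x y : x \in U -> dE x y -> y \in U.
Proof. by case: resU => _ fwd _; apply: fwd. Qed.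

Lemma residual_partner x : x \in U0 -> (m x \in U) = (x \in U).
Proof. by case: resU => _ _; apply. Qed.

Lemma bFU_U0 : bF B :&: U \subset U0.
Proof. exact: subset_trans (subsetIl _ _) (subsetUr _ _). Qed.

Lemma card_partner (X : {set T}) : X \subset U0 -> #|m @: X| = #|X|.
Proof.
move=> XU0; apply: card_in_imset => x y xX yX; apply: (can_in_inj partnerK_U0);
  exact: (subsetP XU0).
Qed.

Lemma partner_sub_adj (X : {set T}) : X \subset bF B :&: U -> m @: X \subset adj BU X.
Proof.
move=> XFU; apply/subsetP => _ /imsetP [f fX ->]; apply/adj_induced_bFP => //.
have /setIP [fF fU] := subsetP XFU f fX.
split; first by rewrite residual_partner ?bF_U0.
by exists f; case: (matching_edge pmM (mem_partner_bF wfB U0_VF pmM (bF_U0 fF) fF)).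
Qed.

Lemma sc_set_partner_closed (X : {set T}) :
  X \subset bF B :&: U -> adj BU X \subset m @: X -> sc_set BU X.
Proof.
move=> XFU adjX; have XU0 := subset_trans XFU bFU_U0.
have hall (X' : {set T}) : X' \subset X -> #|X'| <= #|adj BU X'|.
  move=> X'X; have X'FU := subset_trans X'X XFU.
  by rewrite -(card_partner (subset_trans X'FU bFU_U0)) subset_leq_card ?partner_sub_adj.
split=> //; split=> //; apply/eqP; rewrite eqn_leq hall //=.
by rewrite -(card_partner XU0) subset_leq_card.
Qed.

Lemma residual_minimal_sc : U != set0 -> exists S, minimal_sc BU S.
Proof.
case/set0Pn => x xU; apply: (@minimal_sc_exists _ _ (bF B :&: U)).
  apply/set0Pn; case: (boolP (x \in bF B)) => xF; first by exists x; rewrite inE xF.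
  have xU0 := residual_U0 xU.
  have xV : x \in bV B by move: (subsetP U0_VF x xU0); rewrite inE (negbTE xF) orbF.
  by exists (m x); rewrite inE partner_bV_bF // residual_partner.
apply: sc_set_partner_closed => //; apply/subsetP => y.
case/adj_induced_bFP => // yU [f _ /(bE_VF wfB) [yV _]]; have yU0 := residual_U0 yU.
apply/imsetP; exists (m y); last by rewrite partnerK_U0.
by rewrite inE partner_bV_bF // residual_partner.
Qed.

Section MinimalSet.
Variable S : {set T}.
Hypothesis Smin : minimal_sc BU S.
Let A := adj BU S.
Let C := S :|: A.

Lemma minimal_neq0 : S != set0.
Proof. by case: Smin. Qed.

Lemma minimal_sub : S \subset bF B :&: U.
Proof. by case: Smin => _ [[]]. Qed.

Lemma minimal_adj : A = m @: S.
Proof.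
case: Smin => _ [[_ [cardS _]] _]; apply/eqP; rewrite eq_sym eqEcard /A.
by rewrite partner_sub_adj ?minimal_sub //= card_partner -?cardS ?(subset_trans minimal_sub bFU_U0).
Qed.

Lemma minimal_proper_partner_closed (X : {set T}) :
  X \proper S -> adj BU X \subset m @: X -> X = set0.
Proof.
move=> XS adjX; apply/eqP/negPn/negP => X0; case: Smin => _ [_ minS].
apply: (minS X XS X0); apply: sc_set_partner_closed adjX.
exact: subset_trans (proper_sub XS) minimal_sub.
Qed.

Lemma minimal_reach s a : a \in S -> connect dE s (m a) ->
  forall f, f \in S -> f != a -> connect dE s f.
Proof.
(* Otherwise the f in S unreachable from s would form a smaller self-contained set. *)
move=> aS sa; pose R := [set f in S | (f == a) || connect dE s f].
have SR0 : S :\: R = set0.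
  have SRS : S :\: R \subset S := subsetDl S R.
  have SRFU := subset_trans SRS minimal_sub.
  apply: minimal_proper_partner_closed.
    by rewrite properEneq SRS andbT; apply/eqP => /setP /(_ a); rewrite !inE eqxx aS.
  apply/subsetP => y yadj; have yA : y \in A := subsetP (adjS BU SRS) y yadj.
  move: yadj yA; rewrite minimal_adj.
  case/(adj_induced_bFP wfB _ SRFU) => _ [x /setDP [xS xR] e].
  case/imsetP => f fS yE; subst y; rewrite imset_f // in_setD fS andbT.
  apply: contra xR; rewrite !inE xS fS /= => fR.
  have fU0 : f \in U0 := subsetP bFU_U0 f (subsetP minimal_sub f fS).
  case: (boolP ((m f, x) \in M)) => fxM.
    by rewrite -[x](partner_of_mate (x := m f)) ?partnerK_U0 // /mate fxM.
  have sf : connect dE s (m f).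
    case/orP: fR => [/eqP -> //|sf]; apply: connect_trans sf (connect1 (dedge_partner _)).
    by case/setIP: (subsetP minimal_sub f fS).
  by apply/orP; right; apply: connect_trans sf (connect1 _); rewrite /dedge e fxM orbT.
move=> f fS fa; have : f \notin S :\: R by rewrite SR0 inE.
by rewrite !inE fS (negbTE fa) andbT negbK.
Qed.

Lemma S_sub_U : S \subset U.
Proof. exact: subset_trans minimal_sub (subsetIr _ _). Qed.

Lemma S_bF f : f \in S -> f \in bF B.
Proof. by move=> /(subsetP minimal_sub) /setIP []. Qed.

Lemma S_U0 f : f \in S -> f \in U0.
Proof. by move=> /S_bF /bF_U0. Qed.

Lemma C_partnerE : C = S :|: m @: S.
Proof. by rewrite /C minimal_adj. Qed.

Lemma C_sub_U : C \subset U.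
Proof. by rewrite subUset S_sub_U /A adj_induced ?subsetIr // S_sub_U. Qed.

Lemma C_partner z : z \in C -> m z \in C.
Proof.
rewrite C_partnerE => /setUP [zS|/imsetP [f fS ->]]; first by rewrite inE imset_f ?orbT.
by rewrite partnerK_U0 ?S_U0 // inE fS.
Qed.

Lemma C_bF z : z \in C -> z \in bF B -> z \in S.
Proof.
rewrite C_partnerE => /setUP [//|/imsetP [f fS ->]] mfF.
by case: (bV_bF_disjoint wfB (partner_bF_bV (S_bF fS)) mfF).
Qed.

Lemma dedge_into_C a b : a \in U -> dE a b -> b \in C -> a \in C.
Proof.
move=> aU /dedge_cases [[_ ->]|[e _]] bC; first exact: C_partner.
have bS := C_bF bC (bE_VF wfB e).2.
rewrite inE /A; apply/orP; right.
by apply/(adj_induced_bFP wfB _ minimal_sub); split=> //; exists b.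
Qed.

Lemma residual_next : residual (U :\: C).
Proof.
split.
- by apply/subsetP => x /setDP [/residual_U0].
- move=> x y /setDP [xU xC] xy; rewrite inE (residual_dedge xU xy) andbT.
  by apply: contra xC; apply: dedge_into_C xy.
- move=> x xU0; rewrite !in_setD residual_partner //; congr (~~ _ && _).
  by apply/idP/idP => /C_partner; rewrite ?partnerK_U0.
Qed.

Lemma scc_sub_C z : z \in C -> scc B M z \subset C.
Proof.
move=> zC; apply/subsetP => y; rewrite inE => /and3P [_ zy yz].
have yU := connect_closed residual_dedge (subsetP C_sub_U z zC) zy.
apply/negPn/negP => yC.
have : z \in U :\: C by apply: connect_closed yz; [case: residual_next | rewrite inE yC].
by rewrite inE zC.
Qed.

Lemma S_connect a b : a \in S -> b \in S -> connect dE a b.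
Proof.
move=> aS bS; case: (eqVneq b a) => [->|ba]; first exact: connect0.
exact: minimal_reach aS (connect1 (dedge_partner (S_bF aS))) b bS ba.
Qed.

Lemma C_connect c d : 1 < #|S| -> c \in C -> d \in C -> connect dE c d.
Proof.
rewrite !C_partnerE => S1 /setUP cC /setUP dC.
have [f fS cf] : exists2 f, f \in S & connect dE c f.
  case: cC => [cS|/imsetP [f fS ->]]; first by exists c.
  have /set0Pn [g /setD1P [gf gS]] : S :\ f != set0.
    by move: S1; rewrite (cardsD1 f S) fS add1n ltnS card_gt0.
  by exists g; last exact: minimal_reach fS (connect0 _ _) g gS gf.
have [g gS gd] : exists2 g, g \in S & connect dE g d.
  case: dC => [dS|/imsetP [g gS ->]]; first by exists d.
  by exists g; last exact/connect1/dedge_partner/S_bF.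
exact: connect_trans cf (connect_trans (S_connect fS gS) gd).
Qed.

Lemma cluster_C z : z \in C -> cluster z = C.
Proof.
move=> zC; have zU0 := residual_U0 (subsetP C_sub_U z zC).
have zVF := subsetP U0_VF z zU0.
apply/eqP; rewrite eqEsubset; apply/andP; split.
  rewrite /cluster (matchedE wfB U0_VF pmM) subUset scc_sub_C //=.
  by apply/subsetP => _ /imsetP [x /setIP [xz _] ->]; apply/C_partner/(subsetP (scc_sub_C zC)).
apply/subsetP => y yC; case: (ltnP 1 #|S|) => [S1|S1].
  have yVF := subsetP U0_VF y (residual_U0 (subsetP C_sub_U y yC)).
  by rewrite inE; apply/orP; left; rewrite inE yVF !C_connect.
(* |S| = 1: C = {f, m f} is not strongly connected, yet it is one merged cluster. *)
have /set0Pn [f fS] := minimal_neq0.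
have Sf : S = [set f] by apply/esym/eqP; rewrite eqEcard sub1set fS cards1.
have : y \in [set z; m z].
  move: zC yC; rewrite C_partnerE Sf imset_set1 => /set2P [->|->] // yC.
  by rewrite partnerK_U0 ?S_U0 // setUC.
by case/set2P => ->; [apply: cluster_self | apply: cluster_partner].
Qed.

Lemma cluster_meet_C w y : w \in VF -> y \in cluster w -> y \in C -> cluster w = C.
Proof.
move=> wVF; suff scc_C x : x \in scc B M w -> x \in C -> cluster w = C.
  rewrite inE (matchedE wfB U0_VF pmM) => /orP [/scc_C //|/imsetP [x /setIP [xw xU0] ->]].
  by move=> mxC; apply: (scc_C x xw); rewrite -(partnerK_U0 xU0) C_partner.
move=> xw xC; apply: cluster_C; apply: (subsetP (scc_sub_C xC)).
by move: xw; rewrite inE => /and3P [_ wx xw]; rewrite inE wVF xw wx.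
Qed.

Lemma alg2_edges_C x : (x, C) \in (alg2_output B M).2 <-> x \in adj B S :\: A.
Proof.
have SF : S \subset bF B := subset_trans minimal_sub (subsetIl _ _).
split.
  case/alg2_edgesP => w [wVF _ xw xnw eC].
  have wC : w \in C by rewrite eC cluster_self.
  have xC : x \notin C by rewrite eC.
  case/dedge_cases: xw => [[_ xE]|[e _]]; first by rewrite xE C_partner in xC.
  rewrite in_setD andbC; apply/andP; split.
    by apply/(adj_bFP wfB _ SF); exists w => //; apply: C_bF wC (bE_VF wfB e).2.
  by apply: contra xC => xA; rewrite inE xA orbT.
case/setDP => /(adj_bFP wfB _ SF) [f fS e] xA.
have xV := (bE_VF wfB e).1.
have xfM : (x, f) \notin M.
  apply: contra xA => xfM; rewrite minimal_adj; apply/imsetP; exists f => //.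
  by apply/esym/partner_of_mate; rewrite /mate xfM orbT.
have xC : x \notin C.
  by rewrite inE negb_or xA andbT; apply/negP => /S_bF /(bV_bF_disjoint wfB xV).
have fC : f \in C by rewrite inE fS.
apply/alg2_edgesP; exists f; split; rewrite ?cluster_C //.
- exact: (subsetP U0_VF) (S_U0 fS).
- by rewrite inE xV.
- by rewrite /dedge e xfM orbT.
Qed.

Lemma C_alg2_cluster : C \in (alg2_output B M).1.
Proof.
have /set0Pn [f fS] := minimal_neq0.
have fC : f \in C by rewrite inE fS.
by apply/alg2_clustersP; exists f; rewrite ?cluster_C // (subsetP U0_VF) ?S_U0.
Qed.

Lemma cluster_outside_next K : K \in (alg2_output B M).1 ->
  ~~ (K \subset U :\: C) = (K == C) || ~~ (K \subset U).
Proof.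
case/alg2_clustersP => w wVF ->; rewrite subsetD.
case: (boolP (cluster w \subset U)) => KU /=; last by rewrite orbT.
rewrite orbF -setI_eq0.
apply/set0Pn/eqP => [[y /setIP [yK yC]]|->]; first exact: cluster_meet_C yK yC.
have /set0Pn [f fS] := minimal_neq0.
by exists f; rewrite setIid inE fS.
Qed.

Lemma alg2_outside_next : alg2_outside (U :\: C) =
  (C |: (alg2_outside U).1, (alg2_outside U).2 :|: [set (v, C) | v in adj B S :\: A]).
Proof.
congr (_, _); apply/setP.
  move=> K; rewrite /= in_setU1 !inE.
  case: (boolP (K \in _)) => KG /=; first by rewrite cluster_outside_next.
  by case: eqP => // KC; rewrite KC C_alg2_cluster in KG.
move=> [x K]; rewrite /= !inE.
have -> : ((x, K) \in [set (v, C) | v in adj B S :\: A]) = (K == C) && (x \in adj B S :\: A).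
  by apply/imsetP/andP => [[v vD [-> ->]]|[/eqP -> xD]]; [rewrite eqxx | exists x].
case: (boolP (_ \in _)) => xK /=.
  have [w [wVF _ _ _ Kw]] := (alg2_edgesP x K).1 xK.
  rewrite cluster_outside_next; last by apply/alg2_clustersP; exists w.
  case: eqP => [KC|_]; last by rewrite orbF.
  have xD : x \in adj B S :\: A by apply/alg2_edges_C; rewrite -KC.
  by rewrite xD orbT.
case: (eqVneq K C) => [KC|//]; subst K.
by apply/esym/negbTE; apply: contra xK => /alg2_edges_C.
Qed.

End MinimalSet.
End Step.

Lemma residual_null U : residual U -> null_graph (induced B U) -> U = set0.
Proof.
move=> [UU0 _ _] [/= V0 F0]; apply/setP => x; rewrite inE; apply/negP => xU.
have := subsetP U0_VF x (subsetP UU0 x xU); rewrite inE => /orP [xV|xF].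
  by move/setP: V0 => /(_ x); rewrite !inE xV xU.
by move/setP: F0 => /(_ x); rewrite !inE xF xU.
Qed.

Lemma residual_init : residual U0.
Proof. by split=> // [x y _ /dedge_U0 //|x xU0]; rewrite partner_U0 ?xU0. Qed.

Lemma cluster_W w : w \in W -> cluster w = [set w].
Proof.
move=> wW; have no_in z : ~~ dE z w by apply/negP => /dedge_U0; apply/negP/W_notin_U0.
have sccw : scc B M w = [set w].
  apply/setP => y; rewrite !inE; apply/idP/eqP => [/and3P [_ _ /(connect_to_source no_in)] //|->].
  by rewrite (subsetP WV) ?connect0.
rewrite /cluster sccw (matchedE wfB U0_VF pmM).
suff -> : [set w] :&: U0 = set0 by rewrite imset0 setU0.
by apply/eqP; rewrite setI_eq0 disjoints1 W_notin_U0.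
Qed.

Lemma cluster_U0 x : x \in U0 -> cluster x \subset U0.
Proof.
move=> xU0; rewrite /cluster (matchedE wfB U0_VF pmM) subUset.
have sccU0 : scc B M x \subset U0.
  apply/subsetP => y; rewrite inE => /and3P [_ xy _].
  by apply: connect_closed xU0 xy => a b _ /dedge_U0.
by rewrite sccU0; apply/subsetP => _ /imsetP [y /setIP [_ yU0] ->]; apply: partner_U0.
Qed.

Lemma alg2_outside_init : alg2_outside U0 = ([set [set w] | w in W], set0).
Proof.
congr (_, _); apply/setP.
  move=> K; rewrite inE; apply/andP/imsetP => [[/alg2_clustersP [x xVF ->] xU0]|[w wW ->]].
    have xW : x \in W by apply: VF_notin_U0 xVF _; apply: contra xU0; apply: cluster_U0.
    by exists x; rewrite ?cluster_W.
  have wVF : w \in VF by rewrite inE (subsetP WV).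
  rewrite -(cluster_W wW); split; first by apply/alg2_clustersP; exists w.
  by rewrite cluster_W // sub1set W_notin_U0.
move=> [x K]; rewrite !inE; case: (boolP (_ \in _)) => //= /alg2_edgesP [w [_ _ xw _ ->]].
by rewrite cluster_U0 // (dedge_U0 xw).
Qed.

Lemma alg2_outside_set0 : alg2_outside set0 = alg2_output B M.
Proof.
rewrite [RHS]surjective_pairing; congr (_, _); apply/setP.
  move=> K; rewrite inE subset0 andb_idr // => /alg2_clustersP [x xVF ->].
  by apply/set0Pn; exists x; apply: cluster_self.
move=> [x K]; rewrite inE subset0 andb_idr // => /alg2_edgesP [w [wVF _ _ _ ->]].
by apply/set0Pn; exists w; apply: cluster_self.
Qed.

Lemma alg1_from_outside U G G' : alg1_from B U G G' ->
  residual U -> G = alg2_outside U -> G' = alg2_output B M.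
Proof.
elim=> {U G G'} [U G nullU resU ->|U G S G' Smin _ IH resU EG].
  by rewrite (residual_null resU nullU) alg2_outside_set0.
by apply: IH; [apply: residual_next | rewrite EG alg2_outside_next].
Qed.

Lemma alg1_from_exists U G : residual U -> exists G', alg1_from B U G G'.
Proof.
have [n] := ubnP #|U|; elim: n U G => // n IH U G /ltnSE leUn resU.
have [->|U_ne0] := eqVneq U set0.
  by exists G; apply: alg1_stop; split; rewrite /= setI0.
have [S Smin] := residual_minimal_sc resU U_ne0.
set C := S :|: adj (induced B U) S.
have ltCU : #|U :\: C| < n.
  apply: leq_trans leUn; apply: proper_card; rewrite properE subsetDl /=.
  have /set0Pn [f fS] := minimal_neq0 Smin.
  by apply/subsetPn; exists f; rewrite ?(subsetP (S_sub_U Smin)) // !inE fS.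
have [G' runG'] := IH _ (C |: G.1, G.2 :|: [set (v, C) | v in adj B S :\: adj (induced B U) S])
  ltCU (residual_next resU Smin).
by exists G'; apply: alg1_step Smin runG'.
Qed.

End CausalOrdering.

Theorem theorem6 (T : finType) (B : bigraph T) (W : {set T}) :
  wf_bigraph B ->
  W \subset bV B ->
  self_contained (induced B ((bV B :\: W) :|: bF B)) ->
  forall M : {set T * T},
    perfect_matching (induced B ((bV B :\: W) :|: bF B)) M ->
    (exists G, alg1_output B W G) /\
    (forall G, alg1_output B W G -> G = alg2_output B M).
Proof.
(* Self-containedness of B' follows from the perfect matching M. *)
move=> wfB WV _ M pmM; have res0 := residual_init wfB pmM.
split; first exact (alg1_from_exists wfB pmM _ res0).
move=> G runG; apply: (alg1_from_outside wfB pmM runG res0).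
by rewrite (alg2_outside_init wfB WV pmM).
Qed.
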